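(* Let $p$ be an odd prime with $p\equiv 1\pmod 4$, and let $B$ be a perfect $B[-1,3](p)$ set. If $i\in B$, then $i\cdot\langle -\tfrac32\rangle\subseteq B$, where $\langle -\tfrac32\rangle$ denotes the subgroup of $\mathbb{Z}_p^\ast$ generated by $-3\cdot 2^{-1}\bmod p$.
   Context: $\mathbb{Z}_p^\ast$ is the multiplicative group of nonzero residues modulo $p$. A set $B\subseteq\mathbb{Z}_p$ is a perfect $B[-1,3](p)$ set if every nonzero element of $\mathbb{Z}_p$ has a unique representation $ab \bmod p$ with $a\in\{-1,1,2,3\}$ and $b\in B$ (and $0$ has no such representation); equivalently $B\subseteq\mathbb{Z}_p^\ast$, $|B|=(p-1)/4$, and the sets $\{-b,b,2b,3b\}$, $b\in B$, partition $\mathbb{Z}_p^\ast$. *)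

From HB Require Import structures.
From mathcomp Require Import all_boot all_order all_algebra.
Set Implicit Arguments. Unset Strict Implicit. Unset Printing Implicit Defensive.
Import GRing.Theory.
Local Open Scope ring_scope.

Definition mults : seq int := [:: (-1)%Z; 1%Z; 2%Z; 3%Z].

Definition nreps (p : nat) (B : {set 'F_p}) (x : 'F_p) : nat :=
  \sum_(a <- mults) #|[set b in B | ((a%:~R : 'F_p) * b == x)%R]|.

Definition perfect_Bm13 (p : nat) (B : {set 'F_p}) : Prop :=
  nreps B 0 = 0%N /\ forall x : 'F_p, x != 0 -> nreps B x = 1%N.

Definition cyc_gen (p : nat) (g : 'F_p) : {set 'F_p} :=
  [set g ^+ k | k : 'I_p].

From HB Require Import structures.
From mathcomp Require Import all_boot all_order all_algebra.
From mathcomp Require Import ring zify.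
Set Implicit Arguments.
Unset Strict Implicit.
Unset Printing Implicit Defensive.
Import GRing.Theory.
Local Open Scope ring_scope.

(* For j in B, the residue -3j has a unique representation a*b. The choices
   a = -1, 1, 3 would give 3j (resp. j) a second representation besides 3*j
   (resp. 1*j), so a = 2 and -3j/2 lies in B. Iterating, B is stable under
   multiplication by -3/2, hence by the subgroup it generates. The congruence
   p = 1 mod 4 is only needed to make 2 and 3 invertible. *)

Section Representations.

Variables (p : nat) (B : {set 'F_p}).

Lemma card_reps_gt0 (a : int) (b x : 'F_p) : b \in B -> a%:~R * b = x ->
  (0 < #|[set b in B | (a%:~R * b == x)%R]|)%N.
Proof.
by move=> bB abx; rewrite card_gt0; apply/set0Pn; exists b; rewrite inE bB abx eqxx.
Qed.

Lemma nreps_gt0 (a : int) (b x : 'F_p) :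
  a \in mults -> b \in B -> a%:~R * b = x -> (0 < nreps B x)%N.
Proof.
move=> amults bB abx; rewrite /nreps (bigD1_seq a) //=.
by apply: leq_trans (card_reps_gt0 bB abx) (leq_addr _ _).
Qed.

Lemma nreps_gt1 (a1 a2 : int) (b1 b2 x : 'F_p) :
  a1 \in mults -> a2 \in mults -> a1 != a2 -> b1 \in B -> b2 \in B ->
  a1%:~R * b1 = x -> a2%:~R * b2 = x -> (1 < nreps B x)%N.
Proof.
move=> a1mults a2mults a12 b1B b2B ab1x ab2x.
rewrite /nreps (bigD1_seq a1) //= -big_filter (bigD1_seq a2) ?filter_uniq //.
  apply: leq_add (card_reps_gt0 b1B ab1x) _.
  exact: leq_trans (card_reps_gt0 b2B ab2x) (leq_addr _ _).
by rewrite mem_filter eq_sym a12.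
Qed.

Lemma nreps_gt0P (x : 'F_p) : (0 < nreps B x)%N ->
  exists2 a : int, a \in mults & exists2 b, b \in B & a%:~R * b = x.
Proof.
rewrite /nreps lt0n sum_nat_seq_neq0 => /hasP [a amults].
rewrite -lt0n card_gt0 => /set0Pn [b]; rewrite inE => /andP [bB /eqP abx].
by exists a => //; exists b.
Qed.

Hypothesis perfectB : perfect_Bm13 B.

Lemma perfect_Bm13_neq0 (b : 'F_p) : b \in B -> b != 0.
Proof.
move=> bB; apply/eqP => b0; have := nreps_gt0 (a := 1) isT bB (mul1r b).
by rewrite b0 perfectB.1.
Qed.

Lemma perfect_Bm13_rep (x : 'F_p) : x != 0 ->
  exists2 a : int, a \in mults & exists2 b, b \in B & a%:~R * b = x.
Proof. by move=> x0; apply: nreps_gt0P; rewrite perfectB.2. Qed.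

Lemma perfect_Bm13_rep_uniq (a1 a2 : int) (b1 b2 x : 'F_p) : x != 0 ->
  a1 \in mults -> a2 \in mults -> b1 \in B -> b2 \in B ->
  a1%:~R * b1 = x -> a2%:~R * b2 = x -> a1 = a2.
Proof.
move=> x0 a1mults a2mults b1B b2B ab1x ab2x; apply/eqP/negPn/negP => a12.
by have := nreps_gt1 a1mults a2mults a12 b1B b2B ab1x ab2x; rewrite perfectB.2.
Qed.

Lemma perfect_Bm13_mul_neg3half (j : 'F_p) :
  2%:R != 0 :> 'F_p -> 3%:R != 0 :> 'F_p -> j \in B -> j * (- 3%:R / 2%:R) \in B.
Proof.
move=> neq0_2 neq0_3 jB; have j0 := perfect_Bm13_neq0 jB.
have j3 : 3%:R * j != 0 by rewrite mulf_neq0.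
have minus_j3 : - (3%:R * j) != 0 by rewrite oppr_eq0.
have [a amults [b bB abx]] := perfect_Bm13_rep minus_j3.
move: amults abx; rewrite !inE => /or4P [] /eqP -> abx.
- have b_eq : b = 3%:R * j by apply: oppr_inj; rewrite -abx mulN1r.
  rewrite b_eq in bB.
  by have := perfect_Bm13_rep_uniq (a1 := 1) (a2 := 3) j3 isT isT bB jB (mul1r _) erefl.
- have b_eq : b = - (3%:R * j) by rewrite -abx mul1r.
  rewrite b_eq in bB; have b_rep : (-1)%:~R * - (3%:R * j) = 3%:R * j.
    by rewrite mulN1r opprK.
  by have := perfect_Bm13_rep_uniq (a1 := -1) (a2 := 3) j3 isT isT bB jB b_rep erefl.
- suff -> : j * (- 3%:R / 2%:R) = b by [].
  by apply: (mulfI neq0_2); rewrite [RHS]abx; field.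
- have b_eq : b = - j by apply: (mulfI neq0_3); rewrite [LHS]abx mulrN.
  rewrite b_eq in bB; have b_rep : (-1)%:~R * - j = j by rewrite mulN1r opprK.
  by have := perfect_Bm13_rep_uniq (a1 := -1) (a2 := 1) j0 isT isT bB jB b_rep (mul1r j).
Qed.

End Representations.

Lemma Fp_natr_neq0 (p n : nat) : prime p -> (0 < n < p)%N -> n%:R != 0 :> 'F_p.
Proof.
move=> p_pr n_bounds; rewrite -(dvdn_pcharf (pchar_Fp p_pr)).
by apply/negP => /dvdn_leq; lia.
Qed.

Theorem theorem4p3 (p : nat) (B : {set 'F_p}) (i : 'F_p) :
  prime p -> odd p -> p = 1 %[mod 4] ->
  perfect_Bm13 B -> i \in B ->
  forall y : 'F_p, y \in cyc_gen (- 3%:R / 2%:R : 'F_p) -> i * y \in B.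
Proof.
move=> p_pr _ p_mod4 perfectB iB y /imsetP [k _ ->].
have p_gt3 : (3 < p)%N by have := prime_gt1 p_pr; move: p_mod4; lia.
have neq0_2 := Fp_natr_neq0 (n := 2) p_pr (ltnW p_gt3).
have neq0_3 := Fp_natr_neq0 (n := 3) p_pr p_gt3.
elim: (nat_of_ord k) => [|n IH]; first by rewrite expr0 mulr1.
by rewrite exprSr mulrA; apply: perfect_Bm13_mul_neg3half.
Qed.
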